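(* Let $d\ge 1$, $\varepsilon>0$, let $Q_k,R_k\in\mathbb{R}^{d\times d}$ be symmetric positive definite matrices and $x_k^*\in\mathbb{R}^d$. Define for $x,y\in\mathbb{R}^d$ $$r_k(x,y)=\exp\Big(-\tfrac{1}{\varepsilon}\Big[\tfrac12 (x-x_k^* )^T Q_k (x-x_k^* )+\tfrac12 (y-x)^T R_k (y-x)\Big]\Big).$$ Let $P_{k+1}^{\ominus}\in\mathbb{R}^{d\times d}$ be symmetric positive definite, $\alpha_{k+1}^{\ominus}\in\mathbb{R}^d$, and $\phi_{k+1}^{\ominus}(y)=\mathcal{N}(y\mid \alpha_{k+1}^{\ominus},(P_{k+1}^{\ominus})^{-1})$. Then the function $$\phi_k^{\ominus}(x)=\int_{\mathbb{R}^d} r_k(x,y)\,\phi_{k+1}^{\ominus}(y)\,dy$$ is, up to a positive multiplicative constant, the Gaussian density $\mathcal{N}(x\mid \alpha_k^{\ominus},(P_k^{\ominus})^{-1})$, where $$P_k^{\ominus}=Q_k/\varepsilon+\big(\varepsilon R_k^{-1}+(P_{k+1}^{\ominus})^{-1}\big)^{-1}=Q_k/\varepsilon+P_{k+1}^{\ominus}-P_{k+1}^{\ominus}\big(R_k/\varepsilon+P_{k+1}^{\ominus}\big)^{-1}P_{k+1}^{\ominus},$$ $$\alpha_k^{\ominus}=(P_k^{\ominus})^{-1}\Big(\tfrac{1}{\varepsilon}Q_k x_k^*+\big(\varepsilon R_k^{-1}+(P_{k+1}^{\ominus})^{-1}\big)^{-1}\alpha_{k+1}^{\ominus}\Big)=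\alpha_{k+1}^{\ominus}+(P_k^{\ominus})^{-1}\tfrac{1}{\varepsilon}Q_k\,(x_k^*-\alpha_{k+1}^{\ominus}).$$
   Context: $\mathcal{N}(x\mid\mu,\Sigma)$ denotes the Gaussian density on $\mathbb{R}^d$ with mean $\mu$ and covariance $\Sigma$. The function $r_k$ is the (unnormalized) pairwise reference measure $\exp(-\ell_k/\varepsilon)$ associated with the LQR transition cost $\ell_k(x_k,x_{k+1})=\frac12(x_k-x_k^* )^TQ_k(x_k-x_k^* )+\frac12(x_{k+1}-x_k)^TR_k(x_{k+1}-x_k)$, and $\phi^{\ominus}_k$ is the backward-propagated Gibbs potential of the Schrödinger system. *)

From HB Require Import structures.
From mathcomp Require Import all_boot all_order all_algebra.
From mathcomp Require Import all_classical all_reals all_analysis.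
Set Implicit Arguments. Unset Strict Implicit. Unset Printing Implicit Defensive.
Import Order.TTheory GRing.Theory Num.Theory.
Local Open Scope ring_scope.

Definition qform {R : realType} {n : nat} (A : 'M[R]_n) (v : 'cV[R]_n) : R :=
  (v^T *m A *m v) ord0 ord0.

Definition spd {R : realType} {n : nat} (A : 'M[R]_n) : Prop :=
  A^T = A /\ forall v : 'cV[R]_n, v != 0 -> 0 < qform A v.

Definition gauss_density {R : realType} {n : nat}
  (mu : 'cV[R]_n) (Sigma : 'M[R]_n) (x : 'cV[R]_n) : R :=
  (Num.sqrt ((2 * pi) ^+ n * \det Sigma))^-1 *
  expR (- (2^-1 * qform (invmx Sigma) (x - mu))).

(* Lebesgue integral over R^n, defined as the iterated one-dimensional
   Lebesgue integral over the coordinates (for nonnegative measurable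
   integrands this coincides with the n-dimensional Lebesgue integral by
   Tonelli; MathComp-Analysis has no Lebesgue measure on R^n). *)
Fixpoint integral_Rn {R : realType} (n : nat) : ('cV[R]_n -> \bar R) -> \bar R :=
  match n return ('cV[R]_n -> \bar R) -> \bar R with
  | 0 => fun f => f 0
  | n'.+1 => fun f =>
      (\int[@lebesgue_measure R]_(t in [set: R])
          integral_Rn (fun v : 'cV[R]_n' =>
                         f (col_mx (t%:M : 'M[R]_1) v : 'cV[R]_(n'.+1))))%E
  end.

Definition lqr_ref {R : realType} {n : nat} (eps : R) (Q Rk : 'M[R]_n)
  (xs : 'cV[R]_n) (x y : 'cV[R]_n) : R :=
  expR (- (eps^-1 * (2^-1 * qform Q (x - xs) + 2^-1 * qform Rk (y - x)))).

From HB Require Import structures.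
From mathcomp Require Import all_boot all_order all_algebra.
From mathcomp Require Import all_classical all_reals all_analysis.
From mathcomp Require Import normal_distribution ring lra.
Import Order.TTheory GRing.Theory Num.Theory.
Set Implicit Arguments.
Unset Strict Implicit.
Unset Printing Implicit Defensive.
Local Open Scope ring_scope.

(* The integrand [r_k(x, .) phi_{k+1}] is the exponential of a quadratic in [y] with
   Hessian [A = R_k/eps + P_{k+1}], so everything rests on the Gaussian integral
     int exp (-1/2 y^T A y + b^T y + c) dy = K exp (1/2 b^T A^-1 b + c),   K > 0,
   for SPD [A].  It is proved by induction on the dimension: write [A] in blocks with
   first row [(a, u^T)] and lower-right block [B]; integrating out the last coordinates
   first is Gaussian by induction, and leaves a one-dimensional Gaussian in the first
   coordinate whose precision is the Schur complement [a - u^T B^-1 u > 0].  The same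
   decomposition gives [det A > 0].
   With [b = R_k x/eps + P_{k+1} alpha_{k+1}] the result is the exponential of a quadratic
   in [x]; the Woodbury-type identity
     (eps R^-1 + P^-1)^-1 = (R/eps) (R/eps + P)^-1 P = P - P (R/eps + P)^-1 P
   identifies its Hessian with [P_k], and completing the square yields the mean [alpha_k]. *)

Lemma integral_gauss1 (R : realType) (s : R) : 0 < s -> exists2 K : R, 0 < K &
  forall b g : R,
  (\int[@lebesgue_measure R]_(t in [set: R]) (expR (- (2^-1 * (s * t ^+ 2)) + b * t + g))%:E)%E
  = (K * expR (2^-1 * (b ^+ 2 / s) + g))%:E.
Proof.
move=> s0; set sg := (Num.sqrt s)^-1.
have sg2 : sg ^+ 2 = s^-1 by rewrite exprVn sqr_sqrtr // ltW.
have sg0 : sg != 0 by rewrite invr_eq0 gt_eqF // sqrtr_gt0.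
have pk0 : 0 < normal_peak sg := normal_peak_gt0 sg0.
exists (normal_peak sg)^-1; first by rewrite invr_gt0.
move=> b g.
set c := (normal_peak sg)^-1 * expR (2^-1 * (b ^+ 2 / s) + g).
(* up to the factor [c], the integrand is the normal density of mean b/s and variance 1/s *)
have pdfE t : expR (- (2^-1 * (s * t ^+ 2)) + b * t + g) = c * normal_pdf (b / s) sg t.
  rewrite normal_pdfE //= /c mulrACA mulVf ?gt_eqF // mul1r.
  rewrite /normal_fun -expRD sg2; congr expR.
  by rewrite -mulr_natr; field; rewrite gt_eqF.
under eq_integral do rewrite pdfE EFinM.
rewrite integralZl //; last exact: integrable_normal_pdf.
by rewrite integral_normal_pdf mule1.
Qed.

Section Dot.
Variable F : comRingType.

Definition dot {n} (u v : 'cV[F]_n) : F := (u^T *m v) 0 0.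

Lemma dotC n (u v : 'cV[F]_n) : dot u v = dot v u.
Proof. by rewrite /dot -[u^T *m v]trmxK trmx_mul trmxK mxE. Qed.

Lemma dotDl n (u w v : 'cV[F]_n) : dot (u + w) v = dot u v + dot w v.
Proof. by rewrite /dot linearD mulmxDl mxE. Qed.

Lemma dotDr n (u v w : 'cV[F]_n) : dot u (v + w) = dot u v + dot u w.
Proof. by rewrite /dot mulmxDr mxE. Qed.

Lemma dotNr n (u v : 'cV[F]_n) : dot u (- v) = - dot u v.
Proof. by rewrite /dot mulmxN mxE. Qed.

Lemma dotNl n (u v : 'cV[F]_n) : dot (- u) v = - dot u v.
Proof. by rewrite dotC dotNr dotC. Qed.

Lemma dotZl n (k : F) (u v : 'cV[F]_n) : dot (k *: u) v = k * dot u v.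
Proof. by rewrite /dot linearZ -scalemxAl mxE. Qed.

Lemma dotZr n (k : F) (u v : 'cV[F]_n) : dot u (k *: v) = k * dot u v.
Proof. by rewrite /dot -scalemxAr mxE. Qed.

Lemma dot_mulmxl n (A : 'M[F]_n) (u v : 'cV[F]_n) : dot (A *m u) v = dot u (A^T *m v).
Proof. by rewrite /dot trmx_mul mulmxA. Qed.

End Dot.

Section Blocks.
Variable F : comUnitRingType.

Definition sym_block {n} (a : F) (u : 'cV[F]_n) (B : 'M[F]_n) : 'M[F]_n.+1 :=
  block_mx a%:M u^T u B.

Definition schur {n} (a : F) (u : 'cV[F]_n) (B : 'M[F]_n) : F := a - dot u (invmx B *m u).

Lemma sym_block_split n (A : 'M[F]_n.+1) :
  A^T = A -> exists a u B, A = sym_block a u B.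
Proof.
move=> sA; pose A1 := A : 'M[F]_(1 + n).
exists (ulsubmx A1 0 0), (dlsubmx A1), (drsubmx A1).
by rewrite /sym_block -mx11_scalar trmx_dlsub sA submxK.
Qed.

Lemma col_mx_scalar_split n (b : 'cV[F]_n.+1) :
  exists b1 (b2 : 'cV[F]_n), b = col_mx (b1%:M : 'M[F]_1) b2.
Proof.
pose b0 := b : 'cV[F]_(1 + n).
by exists (usubmx b0 0 0), (dsubmx b0); rewrite -mx11_scalar vsubmxK.
Qed.

Lemma col_mx_scalar_eq0 n (t : F) (v : 'cV[F]_n) :
  (col_mx t%:M v == 0) = (t == 0) && (v == 0).
Proof.
rewrite col_mx_eq0; congr andb; apply/eqP/eqP => [/matrixP/(_ 0 0)|->].
  by rewrite !mxE eqxx mulr1n.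
by rewrite raddf0.
Qed.

Lemma sym_block_symmetric n a (u : 'cV[F]_n) B :
  (sym_block a u B)^T = sym_block a u B -> B^T = B.
Proof.
by rewrite /sym_block -[n.+1]/(1 + n)%N tr_block_mx trmxK tr_scalar_mx => /eq_block_mx [].
Qed.

Lemma dot_col_mx n (b1 t : F) (b2 v : 'cV[F]_n) :
  dot (col_mx b1%:M b2 : 'cV[F]_n.+1) (col_mx t%:M v) = b1 * t + dot b2 v.
Proof.
rewrite /dot -[n.+1]/(1 + n)%N tr_col_mx mul_row_col tr_scalar_mx mul_scalar_mx.
by rewrite scale_scalar_mx mxE [in X in X + _]mxE eqxx mulr1n.
Qed.

Lemma mul_sym_block_col n a (u : 'cV[F]_n) B z (w : 'cV[F]_n) :
  sym_block a u B *m col_mx (z%:M : 'M[F]_1) w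
  = col_mx ((a * z + dot u w)%:M) (z *: u + B *m w).
Proof.
rewrite /sym_block -[n.+1]/(1 + n)%N mul_block_col -scalar_mxM mul_mx_scalar.
by rewrite [u^T *m w]mx11_scalar -raddfD.
Qed.

Lemma det_sym_block n a (u : 'cV[F]_n) B :
  B \in unitmx -> \det (sym_block a u B) = schur a u B * \det B.
Proof.
move=> uB; rewrite /sym_block -[n.+1]/(1 + n)%N.
have -> : block_mx a%:M u^T u B =
    block_mx 1%:M (u^T *m invmx B) 0 1%:M *m block_mx (schur a u B)%:M 0 u B.
  rewrite mulmx_block !mul1mx !mul0mx ?mulmx0 !add0r ?addr0 mulmxKV //.
  by rewrite [u^T *m invmx B *m u]mx11_scalar -raddfD /= /schur /dot mulmxA subrK.
by rewrite det_mulmx det_ublock det_lblock !det1 !mul1r det_scalar1.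
Qed.

End Blocks.

Section QuadraticForms.
Variable R : realType.
Implicit Types (k : R) (n : nat).

Lemma qformE n (A : 'M[R]_n) v : qform A v = dot v (A *m v).
Proof. by rewrite /qform /dot mulmxA. Qed.

Lemma qformDl n (A B : 'M[R]_n) v : qform (A + B) v = qform A v + qform B v.
Proof. by rewrite !qformE mulmxDl dotDr. Qed.

Lemma qformNl n (A : 'M[R]_n) v : qform (- A) v = - qform A v.
Proof. by rewrite !qformE mulNmx dotNr. Qed.

Lemma qformZl n k (A : 'M[R]_n) v : qform (k *: A) v = k * qform A v.
Proof. by rewrite !qformE -scalemxAl dotZr. Qed.

Lemma qformNr n (A : 'M[R]_n) v : qform A (- v) = qform A v.
Proof. by rewrite !qformE mulmxN dotNr dotNl opprK. Qed.

Lemma qformZr n k (A : 'M[R]_n) v : qform A (k *: v) = k ^+ 2 * qform A v.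
Proof. by rewrite !qformE -scalemxAr dotZr dotZl mulrA -expr2. Qed.

Lemma qform_mulmx n (A H : 'M[R]_n) v : qform A (H *m v) = qform (H^T *m A *m H) v.
Proof. by rewrite /qform trmx_mul !mulmxA. Qed.

Lemma qformDr n (A : 'M[R]_n) u v : A^T = A ->
  qform A (u + v) = qform A u + 2 * dot u (A *m v) + qform A v.
Proof.
move=> sA; have cross : dot v (A *m u) = dot u (A *m v) by rewrite dotC dot_mulmxl sA.
by rewrite !qformE mulmxDr !dotDl !dotDr cross; ring.
Qed.

Lemma qformBr n (A : 'M[R]_n) u v : A^T = A ->
  qform A (u - v) = qform A u - 2 * dot u (A *m v) + qform A v.
Proof. by move=> sA; rewrite qformDr // qformNr mulmxN dotNr mulrN. Qed.

Lemma qform_invmx n (A : 'M[R]_n) z :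
  A \in unitmx -> qform (invmx A) (A *m z) = dot (A *m z) z.
Proof. by move=> uA; rewrite /qform /dot -mulmxA mulKmx. Qed.

Lemma qform_sym_block n a t (u v : 'cV[R]_n) (B : 'M[R]_n) :
  qform (sym_block a u B) (col_mx t%:M v) = a * t ^+ 2 + 2 * t * dot u v + qform B v.
Proof.
rewrite /qform /dot /sym_block -[n.+1]/(1 + n)%N.
rewrite tr_col_mx mul_row_block mul_row_col !mulmxDl tr_scalar_mx.
rewrite !mul_scalar_mx -!mulmxA !mul_mx_scalar !mulmxA -!scalemxAl !mxE.
have -> : \sum_j v^T 0 j * (t *: u) j 0 = t * \sum_j u^T 0 j * v j 0.
  by rewrite mulr_sumr; apply: eq_bigr => j _; rewrite !mxE; ring.
rewrite eqxx mulr1n; ring.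
Qed.

Lemma qform_invmx_sym_block n a (u : 'cV[R]_n) B b1 (b2 : 'cV[R]_n) :
  B \in unitmx -> B^T = B -> schur a u B != 0 ->
  qform (invmx (sym_block a u B)) (col_mx b1%:M b2)
  = (b1 - dot u (invmx B *m b2)) ^+ 2 / schur a u B + qform (invmx B) b2.
Proof.
move=> uB sB s0; set Bi := invmx B; set p := dot u (Bi *m b2); set s := schur a u B.
have uA : sym_block a u B \in unitmx.
  by rewrite unitmxE det_sym_block // unitrM unitfE s0 -unitmxE.
set z1 := (b1 - p) / s; set w : 'cV[R]_n := Bi *m b2 - z1 *: (Bi *m u).
have top : a * z1 + dot u w = b1.
  by rewrite /w dotDr dotNr dotZr -/p /z1 /s /schur -/Bi; field.
have bot : z1 *: u + B *m w = b2.
  by rewrite /w mulmxBr scalemxAr !mulKVmx // addrC subrK.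
have Aw : sym_block a u B *m col_mx z1%:M w = col_mx b1%:M b2.
  by rewrite mul_sym_block_col top bot.
have p_sym : dot b2 (Bi *m u) = p by rewrite /p dotC dot_mulmxl trmx_inv sB.
rewrite -Aw qform_invmx // Aw dot_col_mx /w dotDr dotNr dotZr p_sym -qformE.
by rewrite /z1; field.
Qed.

End QuadraticForms.

Section PositiveDefinite.
Variable R : realType.

Lemma spd_sym_block_drsub n a (u : 'cV[R]_n) B : spd (sym_block a u B) -> spd B.
Proof.
case=> sA pA; split; first exact: sym_block_symmetric sA.
move=> v v0; have := pA (col_mx (0%:M : 'M[R]_1) v).
rewrite col_mx_scalar_eq0 (negPf v0) andbF qform_sym_block => /(_ isT).
by rewrite expr0n /= mulr0 mulr0 mul0r !add0r.
Qed.

Lemma schur_gt0 n a (u : 'cV[R]_n) B :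
  spd (sym_block a u B) -> B \in unitmx -> 0 < schur a u B.
Proof.
move=> hA uB; have [sB _] := spd_sym_block_drsub hA.
have := hA.2 (col_mx (1%:M : 'M[R]_1) (- (invmx B *m u))).
rewrite col_mx_scalar_eq0 oner_eq0 qform_sym_block qformNr qform_mulmx.
rewrite trmx_inv sB mulVmx // mul1mx qformE dotNr => /(_ isT).
by rewrite /schur; lra.
Qed.

Lemma spd_sym_block_ind (P : forall n, 'M[R]_n -> Prop) :
  (forall A : 'M[R]_0, P 0%N A) ->
  (forall n a (u : 'cV[R]_n) B,
     spd (sym_block a u B) -> P n B -> P n.+1 (sym_block a u B)) ->
  forall n (A : 'M[R]_n), spd A -> P n A.
Proof.
move=> P0 PS; elim=> [|n IH] A hA; first exact: P0.
have [a [u [B eA]]] := sym_block_split hA.1.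
by rewrite eA in hA *; apply: PS => //; apply: IH; exact: spd_sym_block_drsub hA.
Qed.

Lemma spd_det_gt0 n (A : 'M[R]_n) : spd A -> 0 < \det A.
Proof.
move: n A; apply: spd_sym_block_ind => [A|n a u B hA dB].
  by rewrite det_mx00.
have uB : B \in unitmx by rewrite unitmxE unitfE gt_eqF.
by rewrite det_sym_block // mulr_gt0 // schur_gt0.
Qed.

Lemma spd_unit n (A : 'M[R]_n) : spd A -> A \in unitmx.
Proof. by move=> /spd_det_gt0 dA; rewrite unitmxE unitfE gt_eqF. Qed.

Lemma spdD n (A B : 'M[R]_n) : spd A -> spd B -> spd (A + B).
Proof.
move=> [sA pA] [sB pB]; split; first by rewrite linearD /= sA sB.
by move=> v v0; rewrite qformDl addr_gt0 // ?pA ?pB.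
Qed.

Lemma spdZ n (A : 'M[R]_n) k : 0 < k -> spd A -> spd (k *: A).
Proof.
move=> k0 [sA pA]; split; first by rewrite linearZ /= sA.
by move=> v v0; rewrite qformZl mulr_gt0 // pA.
Qed.

Lemma spd_inv n (A : 'M[R]_n) : spd A -> spd (invmx A).
Proof.
move=> hA; have uA := spd_unit hA; case: hA => sA pA; split; first by rewrite trmx_inv sA.
move=> v v0; rewrite -[v in qform _ v](mulKVmx uA) qform_mulmx sA mulmxV // mul1mx.
apply: pA; apply: contra v0 => /eqP Av0.
by rewrite -(mulKVmx uA v) Av0 mulmx0.
Qed.

End PositiveDefinite.

Section GaussianIntegral.
Variable R : realType.

Lemma mul_expR_ln (k x : R) : 0 < k -> k * expR x = expR (ln k + x).
Proof. by move=> k0; rewrite expRD lnK. Qed.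

Definition gauss_integral_formula n (A : 'M[R]_n) : Prop :=
  exists2 K : R, 0 < K & forall (b : 'cV[R]_n) (c : R),
    integral_Rn (fun y => (expR (- (2^-1 * qform A y) + dot b y + c))%:E)
    = (K * expR (2^-1 * qform (invmx A) b + c))%:E.

Lemma gauss_integral_formula_sym_block n a (u : 'cV[R]_n) B :
  spd (sym_block a u B) -> gauss_integral_formula B ->
  gauss_integral_formula (sym_block a u B).
Proof.
move=> hA [KB KB0 hB]; have hB' := spd_sym_block_drsub hA; have [sB _] := hB'.
have uB := spd_unit hB'; have s0 := schur_gt0 hA uB.
set Bi := invmx B; have sBi : Bi^T = Bi by rewrite trmx_inv sB.
have [K1 K10 h1] := integral_gauss1 s0.
exists (K1 * KB); first by rewrite mulr_gt0.
move=> b c; have [b1 [b2 ->]] := col_mx_scalar_split b.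
set p := dot u (Bi *m b2); set r := qform Bi b2.
have p_sym : dot b2 (Bi *m u) = p by rewrite /p dotC dot_mulmxl sBi.
rewrite [LHS]/=.
transitivity (\int[lebesgue_measure]_(t in [set: R])
   (expR (- (2^-1 * (schur a u B * t ^+ 2)) + (b1 - p) * t + (2^-1 * r + c + ln KB)))%:E)%E.
  apply: eq_integral => t _.
  (* the inner integral is Gaussian in the last coordinates, with linear term b2 - t u *)
  have inner (v : 'cV[R]_n) : expR (- (2^-1 * qform (sym_block a u B) (col_mx t%:M v))
        + dot (col_mx b1%:M b2) (col_mx t%:M v) + c)
      = expR (- (2^-1 * qform B v) + dot (b2 - t *: u) v + (c + b1 * t - 2^-1 * (a * t ^+ 2))).
    by rewrite qform_sym_block dot_col_mx dotDl dotNl dotZl; congr expR; field.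
  under eq_fun do rewrite inner.
  rewrite hB -/Bi qformBr // -scalemxAr dotZr qformZr p_sym -/r mul_expR_ln //.
  by rewrite /schur -/Bi qformE; congr (EFin (expR _)); field.
rewrite h1 qform_invmx_sym_block ?gt_eqF // -/Bi -/p -/r -mulrA (mul_expR_ln _ KB0).
by congr (EFin (K1 * expR _)); field; rewrite gt_eqF.
Qed.

Lemma spd_gauss_integral n (A : 'M[R]_n) : spd A -> gauss_integral_formula A.
Proof.
move: n A; apply: spd_sym_block_ind => [A|n a u B hA].
  exists 1 => // b c /=.
  by rewrite /qform /dot [b]flatmx0 !(mulmx0, mul0mx, trmx0) !mxE mul1r mulr0 oppr0 !add0r.
exact: gauss_integral_formula_sym_block.
Qed.

End GaussianIntegral.

Section GaussianDensity.
Variable R : realType.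

Definition gauss_const n (Sigma : 'M[R]_n) : R := Num.sqrt ((2 * pi) ^+ n * \det Sigma).

Lemma gauss_densityE n (mu : 'cV[R]_n) Sigma x :
  gauss_density mu Sigma x
  = (gauss_const Sigma)^-1 * expR (- (2^-1 * qform (invmx Sigma) (x - mu))).
Proof. by []. Qed.

Lemma gauss_const_gt0 n (Sigma : 'M[R]_n) : spd Sigma -> 0 < gauss_const Sigma.
Proof. by move=> hS; rewrite sqrtr_gt0 mulr_gt0 ?exprn_gt0 ?mulr_gt0 ?pi_gt0 ?spd_det_gt0. Qed.

End GaussianDensity.

Section Woodbury.
Variable F : comUnitRingType.

Lemma invmx_add_invmx n (S P : 'M[F]_n) :
  S \in unitmx -> P \in unitmx -> S + P \in unitmx ->
  invmx (invmx S + invmx P) = S *m invmx (S + P) *m P.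
Proof.
move=> uS uP uSP.
have h1 : (invmx S + invmx P) *m (S *m invmx (S + P) *m P) = 1%:M.
  rewrite mulmxDl -!mulmxA mulKmx // -{1}(mulKmx uP (invmx (S + P) *m P)).
  by rewrite -mulmxDr -mulmxDl (addrC P) mulKVmx // mulVmx.
have [uN _] := mulmx1_unit h1.
by rewrite -[RHS](mulKmx uN) h1 mulmx1.
Qed.

Lemma invmx_add_mulmx_combination n (G H : 'M[F]_n) (x y : 'cV[F]_n) :
  G + H \in unitmx ->
  invmx (G + H) *m (G *m x + H *m y) = y + invmx (G + H) *m G *m (x - y).
Proof.
move=> uGH; have -> : G *m x + H *m y = G *m (x - y) + (G + H) *m y.
  by rewrite mulmxBr mulmxDl addrA subrK.
by rewrite mulmxDr mulKmx // mulmxA addrC.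
Qed.

End Woodbury.

Section LQR.
Variables (R : realType) (n : nat) (eps : R) (Q Rk P : 'M[R]_n) (xs a : 'cV[R]_n).
Hypotheses (heps : 0 < eps) (hQ : spd Q) (hR : spd Rk) (hP : spd P).

Local Notation S := (eps^-1 *: Rk).
Local Notation M := (invmx (eps *: invmx Rk + invmx P)).
Local Notation Pk := (eps^-1 *: Q + M).
Local Notation ak := (invmx Pk *m (eps^-1 *: Q *m xs + M *m a)).

Lemma spd_S : spd S. Proof. by apply: spdZ hR; rewrite invr_gt0. Qed.

Lemma unit_S : S \in unitmx. Proof. exact: spd_unit spd_S. Qed.

Lemma unit_SP : S + P \in unitmx. Proof. exact/spd_unit/spdD/hP/spd_S. Qed.

Lemma lqr_woodbury : M = S *m invmx (S + P) *m P.
Proof.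
have SV : invmx S = eps *: invmx Rk by apply: etrans (invmxZ unit_S) _; rewrite invrK.
rewrite -invmx_add_invmx ?unit_S ?unit_SP ?spd_unit //.
by congr (invmx (_ + _)); rewrite SV.
Qed.

Lemma lqr_precisionE : Pk = eps^-1 *: Q + P - P *m invmx (S + P) *m P.
Proof. by rewrite lqr_woodbury -{1}(addrK P S) !mulmxBl (mulmxV unit_SP) mul1mx addrA. Qed.

Lemma spd_lqr_precision : spd Pk.
Proof.
apply: spdD; first by apply: spdZ hQ; rewrite invr_gt0.
by apply: spd_inv; apply: spdD; [exact: spdZ heps (spd_inv hR) | exact: spd_inv].
Qed.

Lemma lqr_integrandE : exists c0, forall x y,
  lqr_ref eps Q Rk xs x y * gauss_density a (invmx P) y
  = expR (- (2^-1 * qform (S + P) y) + dot (S *m x + P *m a) y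
          + (- (eps^-1 * (2^-1 * qform Q (x - xs))) - 2^-1 * qform S x + c0)).
Proof.
have [sR _] := hR; have [sP _] := hP.
exists (ln (gauss_const (invmx P))^-1 - 2^-1 * qform P a) => x y.
rewrite gauss_densityE invmxK mulrCA -expRD mul_expR_ln; last first.
  by rewrite invr_gt0; apply/gauss_const_gt0/spd_inv.
rewrite /lqr_ref; congr expR.
rewrite (qformBr _ _ sR) (qformBr _ _ sP) qformDl !qformZl dotDl -scalemxAl dotZl.
by rewrite (dotC (Rk *m x)) (dotC (P *m a)); field; rewrite gt_eqF.
Qed.

Lemma lqr_exponentE : exists C, forall x,
  2^-1 * qform (invmx (S + P)) (S *m x + P *m a)
    - eps^-1 * (2^-1 * qform Q (x - xs)) - 2^-1 * qform S x
  = C - 2^-1 * qform Pk (x - ak).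
Proof.
have [sQ _] := hQ; have [sR _] := hR; have [sPk _] := spd_lqr_precision.
have uPk := spd_unit spd_lqr_precision.
set Ai := invmx (S + P).
have sS : S^T = S by rewrite linearZ /= sR.
have sAi : Ai^T = Ai by rewrite trmx_inv linearD /= sS hP.1.
have SAiS : S *m Ai *m S = S - M.
  have -> : S *m Ai *m S = S *m Ai *m (S + P) - S *m Ai *m P by rewrite -mulmxBr addrK.
  by rewrite mulmxKV ?unit_SP // lqr_woodbury.
have Pk_ak : Pk *m ak = eps^-1 *: Q *m xs + M *m a by rewrite mulKVmx.
exists (2^-1 * qform Ai (P *m a) - 2^-1 * (eps^-1 * qform Q xs) + 2^-1 * qform Pk ak) => x.
rewrite (qformDr _ _ sAi) [qform Ai _]qform_mulmx sS SAiS dot_mulmxl sS !mulmxA -lqr_woodbury.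
rewrite (qformBr _ _ sQ) (qformBr _ _ sPk) Pk_ak !qformDl qformNl !qformZl.
by rewrite dotDr -scalemxAl dotZr; field; rewrite gt_eqF.
Qed.

Lemma lqr_backward_gauss : exists2 c : R, 0 < c & forall x,
  integral_Rn (fun y => (lqr_ref eps Q Rk xs x y * gauss_density a (invmx P) y)%:E)
  = (c * gauss_density ak (invmx Pk) x)%:E.
Proof.
have [K K0 hK] := spd_gauss_integral (spdD spd_S hP).
have [c0 hc0] := lqr_integrandE; have [C hC] := lqr_exponentE.
have Z0 : 0 < gauss_const (invmx Pk) := gauss_const_gt0 (spd_inv spd_lqr_precision).
exists (K * gauss_const (invmx Pk) * expR (C + c0)); first by rewrite !mulr_gt0 ?expR_gt0.
move=> x; under eq_fun do rewrite hc0.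
rewrite hK gauss_densityE invmxK !addrA hC; congr EFin.
by rewrite !expRD; field; rewrite gt_eqF.
Qed.

End LQR.

Theorem mainTheorem1 (R : realType) (d : nat) (hd : (1 <= d)%N) (eps : R)
  (heps : 0 < eps) (Q Rk P1 : 'M[R]_d) (xs a1 : 'cV[R]_d)
  (hQ : spd Q) (hR : spd Rk) (hP1 : spd P1) :
  let phi1 := fun y : 'cV[R]_d => gauss_density a1 (invmx P1) y in
  let phik := fun x : 'cV[R]_d =>
    integral_Rn (fun y : 'cV[R]_d => ((lqr_ref eps Q Rk xs x y) * phi1 y)%:E) in
  let M := invmx (eps *: invmx Rk + invmx P1) in
  let Pk := eps^-1 *: Q + M in
  let ak := invmx Pk *m (eps^-1 *: Q *m xs + M *m a1) in
  [/\ Pk = eps^-1 *: Q + P1 - P1 *m invmx (eps^-1 *: Rk + P1) *m P1,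
      ak = a1 + invmx Pk *m (eps^-1 *: Q) *m (xs - a1) &
      exists2 c : R, 0 < c &
        forall x : 'cV[R]_d, phik x = (c * gauss_density ak (invmx Pk) x)%:E].
Proof.
move=> phi1 phik M Pk ak; split.
- exact: lqr_precisionE.
- exact/invmx_add_mulmx_combination/spd_unit/spd_lqr_precision.
- exact: lqr_backward_gauss.
Qed.
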